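(* Let $n\ge2$ be an integer that is not a perfect square, and let $a,b$ be positive rational numbers with $a^2-nb^2=-1$. Put $u=a+b\sqrt n$ and for $k\ge1$ write $u^k=a_k+b_k\sqrt n$ with $a_k,b_k\in\mathbb Q$. Then $$\mathcal L\left(\frac1{u^2}\right)=\sum_{k=1}^{\infty}\left[\mathcal L\left(\frac{1}{n(b_{2k}/a)^2}\right)+\mathcal L\left(\frac{1}{(a_{2k+1}/a)^2}\right)\right].$$ Moreover, if $a,b\in\mathbb Z$ then $b_{2k}/a\in\mathbb Z$ and $a_{2k+1}/a\in\mathbb Z$ for all $k\ge1$.
   Context: $\mathcal L$ is the Rogers dilogarithm: for real $z\le1$, $\mathcal L(z)=\mathrm{Li}_2(z)+\tfrac12\log|z|\log(1-z)$, where $\mathrm{Li}_2(z)=\sum_{m\ge1}z^m/m^2$. *)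

From Stdlib Require Import Reals QArith Qreals ZArith ClassicalEpsilon.
Open Scope R_scope.

Definition Li2_partial (z : R) (N : nat) : R :=
  sum_f_R0 (fun m => z ^ (S m) / (INR (S m)) ^ 2) N.

(* Li2(z) = sum_{m>=1} z^m/m^2 : the limit of the partial sums
   (well defined, i.e. the series converges, for |z| <= 1). *)
Definition Li2 (z : R) : R :=
  epsilon (inhabits 0) (fun l => Un_cv (Li2_partial z) l).

Definition RogersL (z : R) : R :=
  Li2 z + / 2 * ln (Rabs z) * ln (1 - z).

From Coquelicot Require Import Coquelicot.
From Stdlib Require Import Reals QArith Qreals ZArith Lra Lia ClassicalEpsilon.
Open Scope R_scope.

(* Put u = a + b sqrt n and w = b sqrt n - a.  The Pell relation a^2 - n b^2 = -1
   gives u w = 1 with 0 < w < 1, and since sqrt n is irrational the conjugate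
   powers satisfy (a - b sqrt n)^k = a_k - b_k sqrt n = (-w)^k.  Hence
   u^m - w^m equals 2 b_m sqrt n for even m and 2 a_m for odd m, and with t = w^2
   both families of arguments are the numbers
       T_k = t^k (1-t)^2 / (1-t^(k+1))^2 = ((u - w) / (u^(k+1) - w^(k+1)))^2,
   odd k giving the terms with b_(2j) and even k those with a_(2j+1).
   The analytic part works on (0,1) with the power-series form of the Rogers
   dilogarithm: it is differentiable, tends to 0 at 0+, satisfies the reflection
   formula and Abel's five-term relation.  Applied to x_k = t^k(1-t)/(1-t^(k+1)),
   y_k = (1-t)/(1-t^(k+1)), the five-term relation telescopes to
   L(t) = sum_(k>=1) L(T_k); grouping the terms in pairs gives the series of the
   theorem.  The integrality claim follows from the recursion
   (a_(k+1), b_(k+1)) = (a a_k + n b b_k, b a_k + a b_k) by induction on k. *)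

Lemma derive_zero_const (f : R -> R) (lo hi : R) :
  (forall x, lo < x < hi -> is_derive f x 0) ->
  forall x y, lo < x < hi -> lo < y < hi -> f x = f y.
Proof.
  intros Hd x y Hx Hy.
  assert (Hin : forall z, Rmin x y <= z <= Rmax x y -> lo < z < hi).
  { intros z Hz. unfold Rmin, Rmax in Hz. destruct (Rle_dec x y); lra. }
  destruct (MVT_gen f x y (fun _ => 0)) as [c [_ E]].
  - intros z Hz. apply Hd, Hin. lra.
  - intros z Hz. apply continuity_pt_filterlim, (ex_derive_continuous f).
    exists 0. apply Hd, Hin, Hz.
  - lra.
Qed.

Lemma CV_radius_unit_disc (c : nat -> R) :
  (forall k, Rabs (c k) <= 1) -> forall x, Rabs x < 1 -> Rbar_lt (Rabs x) (CV_radius c).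
Proof.
  intros Hc x Hx. destruct (CV_radius_bounded c) as [Hub _].
  assert (H1 : Rbar_le 1 (CV_radius c)).
  { apply Hub. exists 1. intro k. rewrite pow1, Rmult_1_r. apply Hc. }
  destruct (CV_radius c); simpl in *; lra || auto.
Qed.

(* Coefficients of Li2(z) = sum z^k/k^2 and of -ln(1-z)/z = sum z^k/(k+1). *)
Definition dilog_coef (k : nat) : R := match k with O => 0 | S _ => / INR k ^ 2 end.
Definition log_coef (k : nat) : R := / INR (S k).

Lemma inv_INR_S_bounds (k : nat) : 0 < / INR (S k) <= 1.
Proof.
  assert (1 <= INR (S k)) by (rewrite S_INR; pose proof (pos_INR k); lra).
  split; [apply Rinv_0_lt_compat; lra|].
  rewrite <- Rinv_1. apply Rinv_le_contravar; lra.
Qed.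

Lemma dilog_coef_bound (k : nat) : Rabs (dilog_coef k) <= 1.
Proof.
  destruct k as [|k]; unfold dilog_coef.
  - rewrite Rabs_R0; lra.
  - rewrite <- pow_inv. pose proof (inv_INR_S_bounds k).
    set (i := / INR (S k)) in *.
    rewrite Rabs_pos_eq; [|apply pow_le; lra]. simpl. nra.
Qed.

Lemma log_coef_bound (k : nat) : Rabs (log_coef k) <= 1.
Proof. pose proof (inv_INR_S_bounds k). unfold log_coef. rewrite Rabs_pos_eq; lra. Qed.

Lemma PS_derive_dilog_coef (k : nat) : PS_derive dilog_coef k = log_coef k.
Proof.
  unfold PS_derive, dilog_coef, log_coef. field. apply not_0_INR. lia.
Qed.

Lemma geometric_PSeries (z : R) : Rabs z < 1 -> PSeries (fun _ => 1) z = / (1 - z).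
Proof.
  intro Hz. apply is_pseries_unique, is_pseries_R.
  apply is_series_ext with (fun k => z ^ k).
  - intro k. simpl. ring.
  - apply is_series_geom, Hz.
Qed.

(* z * sum_k z^k/(k+1) = -ln(1-z) on (-1,1): both sides vanish at 0 and have
   derivative 1/(1-z). *)
Lemma log_PSeries (z : R) : -1 < z < 1 -> z * PSeries log_coef z = - ln (1 - z).
Proof.
  intro Hz. rewrite <- PSeries_incr_1.
  set (h := fun x => PSeries (PS_incr_1 log_coef) x + ln (1 - x)).
  assert (Hh : forall x, -1 < x < 1 -> is_derive h x 0).
  { intros x Hx.
    assert (Hr : Rbar_lt (Rabs x) (CV_radius (PS_incr_1 log_coef))).
    { apply CV_radius_unit_disc; [|apply Rabs_def1; lra].
      intros [|k]; [simpl; unfold zero; simpl; rewrite Rabs_R0; lra | apply log_coef_bound]. }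
    pose proof (is_derive_PSeries _ _ Hr) as Hseries.
    rewrite (PSeries_ext _ (fun _ => 1)) in Hseries.
    2:{ intro k. unfold PS_derive, PS_incr_1, log_coef. field. apply not_0_INR. lia. }
    rewrite geometric_PSeries in Hseries by (apply Rabs_def1; lra).
    assert (Hlog : is_derive (fun x => ln (1 - x)) x (- / (1 - x))).
    { auto_derive; [lra | field; lra]. }
    replace 0 with (plus (/ (1 - x)) (- / (1 - x))) by (unfold plus; simpl; ring).
    exact (is_derive_plus _ _ _ _ _ Hseries Hlog). }
  pose proof (derive_zero_const h (-1) 1 Hh z 0 Hz ltac:(lra)) as E.
  unfold h in E. rewrite PSeries_0, Rminus_0_r, ln_1 in E. simpl in E.
  unfold zero in E; simpl in E. lra.
Qed.

Definition rogers (z : R) : R := PSeries dilog_coef z + / 2 * ln z * ln (1 - z).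
Definition rogers' (z : R) : R := - / 2 * (ln (1 - z) / z + ln z / (1 - z)).

Lemma is_derive_rogers (z : R) : 0 < z < 1 -> is_derive rogers z (rogers' z).
Proof.
  intro Hz.
  assert (Hr : Rbar_lt (Rabs z) (CV_radius dilog_coef)).
  { apply CV_radius_unit_disc; [apply dilog_coef_bound | apply Rabs_def1; lra]. }
  pose proof (is_derive_PSeries _ _ Hr) as Hseries.
  rewrite (PSeries_ext _ log_coef) in Hseries by apply PS_derive_dilog_coef.
  replace (PSeries log_coef z) with (- ln (1 - z) / z) in Hseries.
  2:{ apply Rmult_eq_reg_l with z; [|lra]. rewrite log_PSeries by lra. field. lra. }
  assert (Hlogs : is_derive (fun z => / 2 * ln z * ln (1 - z)) z
                    (/ 2 * (/ z * ln (1 - z) - ln z * / (1 - z)))).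
  { auto_derive; [lra | replace (1 + - z) with (1 - z) by ring; field; lra]. }
  replace (rogers' z) with (plus (- ln (1 - z) / z) (/ 2 * (/ z * ln (1 - z) - ln z * / (1 - z))))
    by (unfold rogers', plus; simpl; field; lra).
  exact (is_derive_plus _ _ _ _ _ Hseries Hlogs).
Qed.

Lemma continuity_rogers (z : R) : 0 < z < 1 -> continuity_pt rogers z.
Proof.
  intro Hz. apply continuity_pt_filterlim, (ex_derive_continuous rogers).
  exists (rogers' z). apply is_derive_rogers, Hz.
Qed.

Lemma ln_le_sub_1 (y : R) : 0 < y -> ln y <= y - 1.
Proof.
  intro Hy. pose proof (exp_ineq1_le (ln y)) as H. rewrite exp_ln in H by exact Hy. lra.
Qed.

Lemma log_product_bound (z : R) : 0 < z <= / 2 -> Rabs (ln z * ln (1 - z)) <= 4 * sqrt z.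
Proof.
  intro Hz. set (r := sqrt z).
  assert (Hr : 0 < r) by (apply sqrt_lt_R0; lra).
  assert (Hrr : r * r = z) by (apply sqrt_sqrt; lra).
  assert (Hlnz : ln z = 2 * ln r) by (rewrite <- Hrr, ln_mult by lra; ring).
  assert (Hlnr : - ln r <= / r).
  { rewrite <- ln_Rinv by lra.
    pose proof (ln_le_sub_1 (/ r) ltac:(apply Rinv_0_lt_compat; lra)). lra. }
  assert (Hlnr0 : ln r <= 0).
  { rewrite <- ln_1. apply Rlt_le, ln_increasing; nra. }
  assert (Hln1 : ln (1 - z) <= 0) by (rewrite <- ln_1; apply Rlt_le, ln_increasing; lra).
  assert (Hln1' : - ln (1 - z) <= 2 * z).
  { rewrite <- ln_Rinv by lra.
    pose proof (ln_le_sub_1 (/ (1 - z)) ltac:(apply Rinv_0_lt_compat; lra)).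
    assert (/ (1 - z) - 1 <= 2 * z).
    { apply Rmult_le_reg_r with (1 - z); [lra|].
      rewrite Rmult_minus_distr_r, Rinv_l by lra. nra. }
    lra. }
  rewrite Rabs_pos_eq by nra. rewrite Hlnz.
  assert (Hprod : (2 * - ln r) * (- ln (1 - z)) <= (2 * / r) * (2 * z))
    by (apply Rmult_le_compat; lra).
  replace ((2 * / r) * (2 * z)) with (4 * r) in Hprod by (rewrite <- Hrr; field; lra).
  lra.
Qed.

Lemma rogers_vanishes (u : nat -> R) :
  (forall m, 0 < u m < 1) -> is_lim_seq u 0 -> is_lim_seq (fun m => rogers (u m)) 0.
Proof.
  intros Hu Hlim.
  assert (Hseries : is_lim_seq (fun m => PSeries dilog_coef (u m)) 0).
  { replace 0 with (PSeries dilog_coef 0) by (rewrite PSeries_0; reflexivity).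
    apply is_lim_seq_continuous, Hlim. apply PSeries_continuity.
    apply CV_radius_unit_disc; [apply dilog_coef_bound | rewrite Rabs_R0; lra]. }
  assert (Hsqrt : is_lim_seq (fun m => 4 * sqrt (u m)) 0).
  { replace (Finite 0) with (Rbar_mult 4 (sqrt 0)) by (rewrite sqrt_0; simpl; f_equal; ring).
    apply is_lim_seq_scal_l, is_lim_seq_continuous, Hlim. apply continuity_pt_sqrt; lra. }
  assert (Hsmall : Hierarchy.eventually (fun m => u m <= / 2)).
  { apply is_lim_seq_spec in Hlim. destruct (Hlim (mkposreal (/ 2) ltac:(lra))) as [N HN].
    exists N. intros m Hm. specialize (HN m Hm). simpl in HN.
    apply Rabs_def2 in HN. lra. }
  assert (Hlogs : is_lim_seq (fun m => ln (u m) * ln (1 - u m)) 0).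
  { apply is_lim_seq_le_le_loc with (fun m => - (4 * sqrt (u m))) (fun m => 4 * sqrt (u m)).
    - destruct Hsmall as [N HN]. exists N. intros m Hm.
      apply Rabs_le_between, log_product_bound. pose proof (Hu m). specialize (HN m Hm). lra.
    - replace (Finite 0) with (Rbar_opp 0) by (simpl; f_equal; ring).
      apply -> is_lim_seq_opp. exact Hsqrt.
    - exact Hsqrt. }
  pose proof (is_lim_seq_plus' _ _ _ _ Hseries (is_lim_seq_scal_l _ (/ 2) _ Hlogs)) as Hsum.
  simpl in Hsum. rewrite Rmult_0_r, Rplus_0_r in Hsum.
  eapply is_lim_seq_ext; [|exact Hsum]. intro m. unfold rogers. ring.
Qed.

Lemma Li2_partial_cv (z : R) : Rabs z < 1 -> Un_cv (Li2_partial z) (PSeries dilog_coef z).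
Proof.
  intro Hz.
  pose proof (CV_radius_unit_disc dilog_coef dilog_coef_bound z Hz) as Hr.
  pose proof (PSeries_correct _ _ (CV_radius_inside _ _ Hr)) as Hseries.
  apply is_pseries_R in Hseries.
  assert (Hsum : is_lim_seq (sum_n (fun k => dilog_coef k * z ^ k)) (PSeries dilog_coef z))
    by exact Hseries.
  apply is_lim_seq_incr_1 in Hsum.
  apply is_lim_seq_Reals. apply is_lim_seq_ext with (2 := Hsum).
  intro N. rewrite sum_n_Reals, decomp_sum by lia. simpl pred.
  unfold Li2_partial. simpl (dilog_coef 0). rewrite Rmult_0_l, Rplus_0_l.
  apply sum_eq. intros i _. unfold dilog_coef. field. apply not_0_INR. lia.
Qed.

Lemma Li2_PSeries (z : R) : Rabs z < 1 -> Li2 z = PSeries dilog_coef z.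
Proof.
  intro Hz. apply (UL_sequence (Li2_partial z)); [|apply Li2_partial_cv, Hz].
  apply (epsilon_spec (inhabits 0) (fun l => Un_cv (Li2_partial z) l)).
  exists (PSeries dilog_coef z). apply Li2_partial_cv, Hz.
Qed.

Lemma RogersL_rogers (z : R) : 0 < z < 1 -> RogersL z = rogers z.
Proof.
  intro Hz. unfold RogersL, rogers.
  rewrite Li2_PSeries by (apply Rabs_def1; lra). rewrite Rabs_pos_eq by lra. reflexivity.
Qed.

(* Reflection: rogers z + rogers (1 - z) is constant on (0,1), since the derivatives cancel. *)
Lemma rogers_reflection (z w : R) :
  0 < z < 1 -> 0 < w < 1 -> rogers z + rogers (1 - z) = rogers w + rogers (1 - w).
Proof.
  intros Hz Hw. apply (derive_zero_const (fun z => rogers z + rogers (1 - z)) 0 1); auto.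
  intros x Hx.
  assert (Hflip : is_derive (fun x => rogers (1 - x)) x (scal (-1) (rogers' (1 - x)))).
  { apply (is_derive_comp rogers (fun x => 1 - x)); [apply is_derive_rogers; lra|].
    auto_derive; [auto | ring]. }
  replace 0 with (plus (rogers' x) (scal (-1) (rogers' (1 - x)))).
  - exact (is_derive_plus _ _ _ _ _ (is_derive_rogers x Hx) Hflip).
  - unfold plus, scal, mult, rogers'; simpl. unfold mult; simpl.
    replace (1 - (1 - x)) with x by ring. ring.
Qed.

(* The two non-trivial arguments of Abel's five-term relation. *)
Definition abel_x (x y : R) : R := x * (1 - y) / (1 - x * y).
Definition abel_y (x y : R) : R := y * (1 - x) / (1 - x * y).

Lemma abel_x_bounds (x y : R) : 0 < x < 1 -> 0 < y < 1 -> 0 < abel_x x y <= x.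
Proof.
  intros Hx Hy. unfold abel_x. assert (0 < 1 - x * y) by nra. split.
  - apply Rdiv_lt_0_compat; nra.
  - apply Rmult_le_reg_r with (1 - x * y); [lra|].
    unfold Rdiv. rewrite Rmult_assoc, Rinv_l by lra.
    assert (0 <= x * y * (1 - x)) by (apply Rmult_le_pos; nra). nra.
Qed.

Lemma abel_y_bounds (x y : R) :
  0 < x < 1 -> 0 < y < 1 -> 0 < abel_y x y /\ y - x <= abel_y x y <= y.
Proof.
  intros Hx Hy. unfold abel_y. assert (0 < 1 - x * y) by nra.
  split; [apply Rdiv_lt_0_compat; nra|].
  split; apply Rmult_le_reg_r with (1 - x * y); try lra;
    unfold Rdiv; rewrite ?Rmult_assoc, ?Rinv_l by lra.
  - assert (0 <= x * ((1 - y) * (1 - y) + y * (1 - x))) by (apply Rmult_le_pos; nra). nra.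
  - assert (0 <= x * y * (1 - y)) by (apply Rmult_le_pos; nra). nra.
Qed.

Lemma abel_limits (u : nat -> R) (y : R) :
  (forall m, 0 < u m < 1) -> is_lim_seq u 0 -> 0 < y < 1 ->
  is_lim_seq (fun m => abel_x (u m) y) 0 /\ is_lim_seq (fun m => abel_y (u m) y) y.
Proof.
  intros Hu Hlim Hy. split.
  - apply is_lim_seq_le_le with (fun _ => 0) u; [|apply is_lim_seq_const | exact Hlim].
    intro m. pose proof (abel_x_bounds (u m) y (Hu m) Hy). lra.
  - apply is_lim_seq_le_le with (fun m => y - u m) (fun _ => y); [| |apply is_lim_seq_const].
    + intro m. pose proof (abel_y_bounds (u m) y (Hu m) Hy). lra.
    + replace (Finite y) with (Finite (y - 0)) by (f_equal; ring).
      apply is_lim_seq_minus'; [apply is_lim_seq_const | exact Hlim].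
Qed.

Definition five_term_defect (y x : R) : R :=
  rogers x + rogers y - rogers (x * y) - rogers (abel_x x y) - rogers (abel_y x y).

(* The chain-rule contributions of the five terms cancel identically. *)
Lemma five_term_derivatives_cancel (x y : R) : 0 < x < 1 -> 0 < y < 1 ->
  rogers' x - y * rogers' (x * y) - (1 - y) / (1 - x * y) ^ 2 * rogers' (abel_x x y)
  + y * (1 - y) / (1 - x * y) ^ 2 * rogers' (abel_y x y) = 0.
Proof.
  intros Hx Hy. assert (0 < x * y < 1) by (split; nra).
  unfold rogers', abel_x, abel_y.
  replace (1 - x * (1 - y) / (1 - x * y)) with ((1 - x) / (1 - x * y)) by (field; lra).
  replace (1 - y * (1 - x) / (1 - x * y)) with ((1 - y) / (1 - x * y)) by (field; lra).
  rewrite !ln_div, !ln_mult by nra.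
  generalize (ln x) (ln y) (ln (1 - x)) (ln (1 - y)) (ln (1 - x * y)).
  intros lx ly l1x l1y l1xy. field. repeat split; lra.
Qed.

Lemma is_derive_five_term_defect (y x : R) :
  0 < y < 1 -> 0 < x < 1 -> is_derive (five_term_defect y) x 0.
Proof.
  intros Hy Hx.
  assert (Hxy : 0 < x * y < 1) by (split; nra).
  pose proof (abel_x_bounds x y Hx Hy) as Hax.
  pose proof (abel_y_bounds x y Hx Hy) as Hay.
  assert (Dprod : is_derive (fun x => rogers (x * y)) x (scal y (rogers' (x * y)))).
  { apply (is_derive_comp rogers (fun x => x * y)); [apply is_derive_rogers; lra|].
    auto_derive; [auto | ring]. }
  assert (Dax : is_derive (fun x => rogers (abel_x x y)) x
                  (scal ((1 - y) / (1 - x * y) ^ 2) (rogers' (abel_x x y)))).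
  { apply (is_derive_comp rogers (fun x => abel_x x y)); [apply is_derive_rogers; lra|].
    unfold abel_x. auto_derive; [lra | field; lra]. }
  assert (Day : is_derive (fun x => rogers (abel_y x y)) x
                  (scal (- y * (1 - y) / (1 - x * y) ^ 2) (rogers' (abel_y x y)))).
  { apply (is_derive_comp rogers (fun x => abel_y x y)); [apply is_derive_rogers; lra|].
    unfold abel_y. auto_derive; [lra | field; lra]. }
  pose proof (is_derive_minus _ _ _ _ _ (is_derive_minus _ _ _ _ _ (is_derive_minus _ _ _ _ _
    (is_derive_plus _ _ _ _ _ (is_derive_rogers x Hx) (is_derive_const (rogers y) x))
    Dprod) Dax) Day) as D.
  rewrite <- (five_term_derivatives_cancel x y Hx Hy).
  revert D. unfold minus, plus, opp, scal, zero; simpl. unfold mult; simpl.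
  match goal with |- is_derive _ _ ?l -> _ => replace l with
    (rogers' x - y * rogers' (x * y) - (1 - y) / (1 - x * y) ^ 2 * rogers' (abel_x x y)
     + y * (1 - y) / (1 - x * y) ^ 2 * rogers' (abel_y x y)) by (field; lra) end.
  intro Hderiv. exact Hderiv.
Qed.

Lemma rogers_five_term (x y : R) : 0 < x < 1 -> 0 < y < 1 ->
  rogers x + rogers y = rogers (x * y) + rogers (abel_x x y) + rogers (abel_y x y).
Proof.
  intros Hx Hy.
  set (u := fun m : nat => (/ 2) ^ S m).
  assert (Hu : forall m, 0 < u m < 1).
  { intro m. unfold u. split; [apply pow_lt; lra | apply pow_lt_1_compat; lra || lia]. }
  assert (Hlim : is_lim_seq u 0).
  { apply (is_lim_seq_incr_1 (fun m => (/ 2) ^ m)), is_lim_seq_geom. rewrite Rabs_pos_eq; lra. }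
  assert (Hconst : forall m, five_term_defect y (u m) = five_term_defect y x).
  { intro m. apply (derive_zero_const (five_term_defect y) 0 1); auto.
    intros t Ht. apply is_derive_five_term_defect; auto. }
  assert (Hprod : is_lim_seq (fun m => u m * y) 0).
  { replace (Finite 0) with (Rbar_mult 0 y) by (simpl; f_equal; ring).
    apply is_lim_seq_scal_r, Hlim. }
  destruct (abel_limits u y Hu Hlim Hy) as [Hax Hay].
  assert (Hdefect : is_lim_seq (fun m => five_term_defect y (u m)) 0).
  { replace 0 with (0 + rogers y - 0 - 0 - rogers y) by ring.
    apply is_lim_seq_minus'; [apply is_lim_seq_minus'; [apply is_lim_seq_minus'|]|].
    - apply is_lim_seq_plus'; [apply rogers_vanishes, Hlim; exact Hu | apply is_lim_seq_const].
    - apply rogers_vanishes, Hprod. intro m. specialize (Hu m). split; nra.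
    - apply rogers_vanishes, Hax. intro m.
      pose proof (abel_x_bounds (u m) y (Hu m) Hy). specialize (Hu m). lra.
    - apply is_lim_seq_continuous, Hay. apply continuity_rogers, Hy. }
  apply (is_lim_seq_ext _ (fun _ => five_term_defect y x)) in Hdefect; [|exact Hconst].
  apply is_lim_seq_unique in Hdefect. rewrite Lim_seq_const in Hdefect.
  injection Hdefect as E. unfold five_term_defect in E. lra.
Qed.

Section Telescope.
Variable t : R.
Hypothesis Ht : 0 < t < 1.

(* x_k = t^k (1-t)/(1-t^(k+1)), y_k = (1-t)/(1-t^(k+1)) and their product
   T_k = t^k (1-t)^2/(1-t^(k+1))^2; the five-term relation at (x_k, y_k)
   produces (x_(k+1), y_(k+1)). *)
Definition tele_x (k : nat) : R := abel_x (t ^ k) t.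
Definition tele_y (k : nat) : R := 1 - abel_y (t ^ k) t.
Definition tele_term (k : nat) : R := tele_x k * tele_y k.

Lemma pow_unit_interval (k : nat) : (1 <= k)%nat -> 0 < t ^ k < 1.
Proof. intro Hk. split; [apply pow_lt; lra | apply pow_lt_1_compat; lra || lia]. Qed.

Lemma tele_bounds (k : nat) : (1 <= k)%nat -> 0 < tele_x k < 1 /\ 0 < tele_y k < 1.
Proof.
  intro Hk. pose proof (pow_unit_interval k Hk) as Hp. unfold tele_x, tele_y.
  pose proof (abel_x_bounds _ _ Hp Ht). pose proof (abel_y_bounds _ _ Hp Ht). lra.
Qed.

Lemma tele_term_bounds (k : nat) : (1 <= k)%nat -> 0 < tele_term k < 1.
Proof. intro Hk. destruct (tele_bounds k Hk). unfold tele_term. split; nra. Qed.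

Lemma tele_step (k : nat) : (1 <= k)%nat ->
  rogers (tele_x k) + rogers (tele_y k) =
  rogers (tele_term k) + rogers (tele_x (S k)) + rogers (tele_y (S k)).
Proof.
  intro Hk. destruct (tele_bounds k Hk) as [Hx Hy].
  rewrite (rogers_five_term _ _ Hx Hy).
  pose proof (pow_unit_interval k Hk) as Hp.
  unfold tele_term, tele_x, tele_y, abel_x, abel_y. simpl (t ^ S k).
  set (P := t ^ k) in *.
  assert (E : 1 - P * (1 - t) / (1 - P * t) * (1 - t * (1 - P) / (1 - P * t)) =
              (1 - P) * (1 - t * P * t) / (1 - P * t) ^ 2) by (field; nra).
  rewrite E. f_equal; [f_equal|]; f_equal; field; repeat split; nra.
Qed.

Lemma tele_start : rogers (tele_x 1) + rogers (tele_y 1) = rogers t + rogers (1 - t).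
Proof.
  assert (E : tele_y 1 = 1 - tele_x 1).
  { unfold tele_x, tele_y, abel_x, abel_y. field. nra. }
  rewrite E. apply rogers_reflection; [apply tele_bounds; lia | exact Ht].
Qed.

Lemma tele_partial_sums (m : nat) :
  sum_f_R0 (fun k => rogers (tele_term (S k))) m =
  rogers t + rogers (1 - t) - rogers (tele_x (S (S m))) - rogers (tele_y (S (S m))).
Proof.
  induction m as [|m IH]; simpl sum_f_R0.
  - pose proof (tele_step 1 ltac:(lia)). pose proof tele_start. lra.
  - rewrite IH. pose proof (tele_step (S (S m)) ltac:(lia)). lra.
Qed.

Lemma rogers_telescoped_series :
  Un_cv (fun m => sum_f_R0 (fun k => rogers (tele_term (S k))) m) (rogers t).
Proof.
  apply is_lim_seq_Reals.
  set (u := fun m : nat => t ^ S (S m)).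
  assert (Hu : forall m, 0 < u m < 1) by (intro m; apply pow_unit_interval; lia).
  assert (Hlim : is_lim_seq u 0).
  { apply (is_lim_seq_incr_1 (fun m => t ^ S m)), (is_lim_seq_incr_1 (fun m => t ^ m)).
    apply is_lim_seq_geom. rewrite Rabs_pos_eq; lra. }
  destruct (abel_limits u t Hu Hlim Ht) as [Hx Hy].
  replace (rogers t) with (rogers t + rogers (1 - t) - 0 - rogers (1 - t)) by ring.
  eapply is_lim_seq_ext; [intro m; symmetry; apply tele_partial_sums|].
  apply is_lim_seq_minus'; [apply is_lim_seq_minus'; [apply is_lim_seq_const|] |].
  - apply rogers_vanishes, Hx. intro m. apply tele_bounds. lia.
  - apply is_lim_seq_continuous; [apply continuity_rogers; lra|].
    apply is_lim_seq_minus'; [apply is_lim_seq_const | exact Hy].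
Qed.

End Telescope.

Lemma tele_term_closed_form (w : R) (k : nat) : 0 < w < 1 ->
  tele_term (w ^ 2) k = ((/ w - w) / (/ w ^ S k - w ^ S k)) ^ 2.
Proof.
  intro Hw.
  assert (Hq : 0 < w ^ S k < 1)
    by (split; [apply pow_lt; lra | apply pow_lt_1_compat; lra || lia]).
  unfold tele_term, tele_x, tele_y, abel_x, abel_y.
  rewrite <- pow_mult, Nat.mul_comm, pow_mult. simpl (w ^ S k) in *.
  set (q := w ^ k) in *.
  field. repeat split; nra.
Qed.

Lemma Un_cv_sum_pairs (f : nat -> R) (l : R) :
  Un_cv (fun N => sum_f_R0 f N) l ->
  Un_cv (fun N => sum_f_R0 (fun j => f (2 * j)%nat + f (2 * j + 1)%nat) N) l.
Proof.
  intros Hcv.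
  assert (Hpairs : forall N,
    sum_f_R0 (fun j => f (2 * j)%nat + f (2 * j + 1)%nat) N = sum_f_R0 f (2 * N + 1)).
  { induction N as [|N IH]; [reflexivity|].
    rewrite tech5, IH.
    replace (2 * S N)%nat with (S (2 * N + 1)) by lia.
    replace (S (2 * N + 1) + 1)%nat with (S (S (2 * N + 1))) by lia.
    rewrite !tech5. ring. }
  intros eps Heps. destruct (Hcv eps Heps) as [N0 HN0].
  exists N0. intros N HN. rewrite Hpairs. apply HN0. lia.
Qed.

(* If p^2 = n q^2 with q > 0 then n is a perfect square: after dividing p and q
   by their gcd, q divides p^2 while being coprime to p, so q = 1. *)
Lemma rational_square_root_integral (p q n : Z) :
  (0 < q)%Z -> (p * p = n * (q * q))%Z -> exists m : Z, n = (m * m)%Z.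
Proof.
  intros Hq E. set (g := Z.gcd p q).
  assert (Hg : (0 < g)%Z).
  { assert (g <> 0%Z) by (intro H0; apply Z.gcd_eq_0 in H0; lia).
    pose proof (Z.gcd_nonneg p q). unfold g in *; lia. }
  destruct (Z.gcd_divide_l p q) as [p' Hp]. destruct (Z.gcd_divide_r p q) as [q' Hq'].
  fold g in Hp, Hq'.
  assert (Hcop : Z.gcd p' q' = 1%Z).
  { replace p' with (p / g)%Z by (rewrite Hp; apply Z.div_mul; lia).
    replace q' with (q / g)%Z by (rewrite Hq'; apply Z.div_mul; lia).
    apply Z.gcd_div_gcd; unfold g; lia. }
  assert (E' : (p' * p' = n * (q' * q'))%Z).
  { apply (Z.mul_reg_r _ _ (g * g)); [nia|]. rewrite Hp, Hq' in E. nia. }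
  assert (Hdiv : (q' | p')%Z).
  { apply (Z.gauss q' p' p'); [exists (n * q')%Z; lia | rewrite Z.gcd_comm; exact Hcop]. }
  assert (Hunit : (q' | 1)%Z).
  { rewrite <- Hcop. apply Z.gcd_greatest; [exact Hdiv | apply Z.divide_refl]. }
  apply Z.divide_1_r in Hunit.
  exists p'. destruct Hunit as [-> | ->]; lia.
Qed.

Lemma Q2R_inject_Z (z : Z) : Q2R (inject_Z z) = IZR z.
Proof. unfold Q2R, inject_Z. simpl. field. Qed.

Lemma Q2R_pos (q : Q) : (0 < q)%Q -> 0 < Q2R q.
Proof. intro Hq. rewrite <- RMicromega.Q2R_0. apply Qlt_Rlt, Hq. Qed.

Lemma Q2R_pell (n : nat) (a b : Q) :
  (a * a - inject_Z (Z.of_nat n) * (b * b) == -1)%Q ->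
  Q2R a * Q2R a - INR n * (Q2R b * Q2R b) = -1.
Proof.
  intro Hpell. apply Qeq_eqR in Hpell.
  rewrite Q2R_minus, !Q2R_mult, Q2R_inject_Z, <- INR_IZR_INZ in Hpell.
  rewrite Hpell. unfold Q2R. simpl. field.
Qed.

Lemma sqrt_nonsquare_irrational (n : nat) :
  ~ (exists m : nat, n = (m * m)%nat) -> forall r : Q, Q2R r <> sqrt (INR n).
Proof.
  intros Hns [p q] Hr. apply Hns. unfold Q2R in Hr. simpl in Hr.
  assert (Hq : 0 < IZR (Z.pos q)) by (apply IZR_lt; lia).
  assert (E : IZR p * IZR p = INR n * (IZR (Z.pos q) * IZR (Z.pos q))).
  { replace (IZR p) with (sqrt (INR n) * IZR (Z.pos q)) by (rewrite <- Hr; field; lra).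
    pose proof (sqrt_sqrt (INR n) (pos_INR n)) as Hsq. set (r := sqrt (INR n)) in *.
    rewrite <- Hsq. ring. }
  rewrite INR_IZR_INZ, <- !mult_IZR in E. apply eq_IZR in E.
  destruct (rational_square_root_integral p (Z.pos q) (Z.of_nat n) ltac:(lia) E) as [m Hm].
  exists (Z.to_nat (Z.abs m)). apply Nat2Z.inj.
  rewrite Nat2Z.inj_mul, Z2Nat.id, Hm by lia. nia.
Qed.

Lemma rational_coords_unique (s : R) (x1 y1 x2 y2 : Q) :
  (forall r : Q, Q2R r <> s) ->
  Q2R x1 + Q2R y1 * s = Q2R x2 + Q2R y2 * s -> Q2R x1 = Q2R x2 /\ Q2R y1 = Q2R y2.
Proof.
  intros Hirr E.
  destruct (Req_dec (Q2R y1) (Q2R y2)) as [Hy|Hy]; [split; [rewrite Hy in E; lra | exact Hy]|].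
  exfalso. apply (Hirr ((x2 - x1) / (y1 - y2))%Q).
  assert (Hq : ~ (y1 - y2 == 0)%Q).
  { intro H. apply Qeq_eqR in H. rewrite Q2R_minus, RMicromega.Q2R_0 in H. lra. }
  rewrite Q2R_div, !Q2R_minus by exact Hq.
  apply Rmult_eq_reg_r with (Q2R y1 - Q2R y2); [field_simplify; lra | lra].
Qed.

Lemma negative_pell_unit (A B N : R) :
  0 < A -> 0 < B -> 0 <= N -> A * A - N * (B * B) = -1 ->
  0 < B * sqrt N - A < 1 /\ A + B * sqrt N = / (B * sqrt N - A).
Proof.
  intros HA HB HN Hpell.
  pose proof (sqrt_sqrt N HN) as Hs. pose proof (sqrt_pos N) as Hs0.
  set (s := sqrt N) in *.
  assert (Hunit : (A + B * s) * (B * s - A) = 1).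
  { replace ((A + B * s) * (B * s - A)) with (- (A * A - s * s * (B * B))) by ring.
    rewrite Hs. lra. }
  assert (Hu0 : 0 < A + B * s) by nra.
  assert (Hw : 0 < B * s - A) by nra.
  split; [split; [exact Hw | nra]|].
  apply Rmult_eq_reg_r with (B * s - A); [|lra]. rewrite Rinv_l; lra.
Qed.

Lemma pow_opp_even (w : R) (k : nat) : (- w) ^ (2 * k) = w ^ (2 * k).
Proof. replace (- w) with (-1 * w) by ring. rewrite Rpow_mult_distr, pow_1_even. ring. Qed.

Lemma pow_opp_odd (w : R) (k : nat) : (- w) ^ S (2 * k) = - w ^ S (2 * k).
Proof. replace (- w) with (-1 * w) by ring. rewrite Rpow_mult_distr, pow_1_odd. ring. Qed.

Section PellPowers.
Variables (n : nat) (a b : Q) (ak bk : nat -> Q).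
Hypothesis Hirr : forall r : Q, Q2R r <> sqrt (INR n).
Hypothesis Hpow : forall k : nat, (1 <= k)%nat ->
  (Q2R a + Q2R b * sqrt (INR n)) ^ k = Q2R (ak k) + Q2R (bk k) * sqrt (INR n).

Local Notation s := (sqrt (INR n)).

Lemma sqrt_INR_sqr : s * s = INR n.
Proof. apply sqrt_sqrt, pos_INR. Qed.

Lemma pell_first_coeffs : Q2R (ak 1%nat) = Q2R a /\ Q2R (bk 1%nat) = Q2R b.
Proof. apply rational_coords_unique with s; [exact Hirr|]. rewrite <- Hpow by lia. ring. Qed.

(* Multiplying by a + b sqrt n gives the recursion of the coordinates. *)
Lemma pell_recursion (k : nat) : (1 <= k)%nat ->
  Q2R (ak (S k)) = Q2R a * Q2R (ak k) + INR n * (Q2R b * Q2R (bk k)) /\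
  Q2R (bk (S k)) = Q2R b * Q2R (ak k) + Q2R a * Q2R (bk k).
Proof.
  intro Hk.
  assert (E : Q2R (ak (S k)) + Q2R (bk (S k)) * s =
    Q2R (a * ak k + inject_Z (Z.of_nat n) * (b * bk k)) + Q2R (b * ak k + a * bk k) * s).
  { rewrite <- Hpow by lia. simpl pow. rewrite Hpow by exact Hk.
    rewrite !Q2R_plus, !Q2R_mult, Q2R_inject_Z, <- INR_IZR_INZ.
    pose proof sqrt_INR_sqr as Hs. set (r := s) in *. rewrite <- Hs. ring. }
  destruct (rational_coords_unique s _ _ _ _ Hirr E) as [E1 E2].
  rewrite E1, E2, !Q2R_plus, !Q2R_mult, Q2R_inject_Z, <- INR_IZR_INZ. split; reflexivity.
Qed.

Lemma pell_conjugate_power (k : nat) : (1 <= k)%nat ->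
  (Q2R a - Q2R b * s) ^ k = Q2R (ak k) - Q2R (bk k) * s.
Proof.
  induction k as [|k IH]; intro Hk; [lia|].
  destruct (Nat.eq_dec k 0) as [->|Hk0].
  - destruct pell_first_coeffs as [E1 E2]. rewrite E1, E2. ring.
  - destruct (pell_recursion k ltac:(lia)) as [E1 E2].
    simpl pow. rewrite IH, E1, E2 by lia.
    pose proof sqrt_INR_sqr as Hs. set (r := s) in *. rewrite <- Hs. ring.
Qed.

Hypotheses (HA : 0 < Q2R a) (HB : 0 < Q2R b).
Hypothesis Hpell : Q2R a * Q2R a - INR n * (Q2R b * Q2R b) = -1.

Local Notation w := (Q2R b * sqrt (INR n) - Q2R a).

Lemma pell_unit_powers (m : nat) : (1 <= m)%nat ->
  / w ^ m = Q2R (ak m) + Q2R (bk m) * s /\ (- w) ^ m = Q2R (ak m) - Q2R (bk m) * s.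
Proof.
  intro Hm. destruct (negative_pell_unit _ _ _ HA HB (pos_INR n) Hpell) as [_ Hu].
  rewrite <- pow_inv, <- Hu, Hpow by exact Hm. split; [reflexivity|].
  replace (- w) with (Q2R a - Q2R b * s) by ring.
  apply pell_conjugate_power; assumption.
Qed.

Lemma pell_dilog_arguments (j : nat) :
  1 / (INR n * (Q2R (bk (2 * S j)%nat) / Q2R a) ^ 2) = tele_term (w ^ 2) (S (2 * j)) /\
  1 / (Q2R (ak (2 * S j + 1)%nat) / Q2R a) ^ 2 = tele_term (w ^ 2) (S (2 * j + 1)).
Proof.
  destruct (negative_pell_unit _ _ _ HA HB (pos_INR n) Hpell) as [Hw Hu].
  assert (H2A : / w - w = 2 * Q2R a) by (rewrite <- Hu; ring).
  assert (Hgap : forall m, (1 <= m)%nat -> 0 < / w ^ m - w ^ m).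
  { intros m Hm.
    assert (0 < w ^ m < 1) by (split; [apply pow_lt | apply pow_lt_1_compat]; lra || lia).
    assert (1 < / w ^ m) by (rewrite <- Rinv_1; apply Rinv_lt_contravar; lra). lra. }
  pose proof sqrt_INR_sqr as Hs.
  rewrite !tele_term_closed_form, H2A by exact Hw. split.
  - replace (S (S (2 * j))) with (2 * S j)%nat by lia.
    pose proof (Hgap (2 * S j)%nat ltac:(lia)) as Hpos.
    destruct (pell_unit_powers (2 * S j) ltac:(lia)) as [E1 E2].
    rewrite pow_opp_even in E2. rewrite E1, E2 in *.
    set (y := Q2R (bk (2 * S j)%nat)) in *. set (r := s) in *.
    rewrite <- Hs. field. split; [lra | nra].
  - replace (S (S (2 * j + 1))) with (S (2 * S j)) by lia.
    replace (2 * S j + 1)%nat with (S (2 * S j)) by lia.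
    pose proof (Hgap (S (2 * S j)) ltac:(lia)) as Hpos.
    destruct (pell_unit_powers (S (2 * S j)) ltac:(lia)) as [E1 E2].
    rewrite pow_opp_odd in E2.
    replace (/ w ^ S (2 * S j) - w ^ S (2 * S j)) with (2 * Q2R (ak (S (2 * S j)))) in * by lra.
    field. lra.
Qed.

End PellPowers.

Definition is_integer (r : R) : Prop := exists z : Z, r = IZR z.

Lemma is_integer_plus (r1 r2 : R) : is_integer r1 -> is_integer r2 -> is_integer (r1 + r2).
Proof. intros [z1 ->] [z2 ->]. exists (z1 + z2)%Z. symmetry. apply plus_IZR. Qed.

Lemma is_integer_mult (r1 r2 : R) : is_integer r1 -> is_integer r2 -> is_integer (r1 * r2).
Proof. intros [z1 ->] [z2 ->]. exists (z1 * z2)%Z. symmetry. apply mult_IZR. Qed.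

Ltac integer_closure :=
  repeat (assumption || apply is_integer_plus || apply is_integer_mult).

Lemma pell_coeffs_divisible (A B N : R) (x y : nat -> R) :
  is_integer A -> is_integer B -> is_integer N -> A <> 0 ->
  x 1%nat = A -> y 1%nat = B ->
  (forall k, (1 <= k)%nat -> x (S k) = A * x k + N * (B * y k) /\ y (S k) = B * x k + A * y k) ->
  forall k, (1 <= k)%nat -> is_integer (y (2 * k)%nat / A) /\ is_integer (x (2 * k + 1)%nat / A).
Proof.
  intros IA IB IN HA Hx1 Hy1 Hrec.
  (* From an odd index m with A | x_m and y_m integral, pass to m + 1 and m + 2. *)
  assert (Hnext : forall m, (1 <= m)%nat -> is_integer (x m / A) -> is_integer (y m) ->
    is_integer (y (S m) / A) /\ is_integer (x (S (S m)) / A) /\ is_integer (y (S (S m)))).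
  { intros m Hm Ix Iy.
    destruct (Hrec m Hm) as [E1 E2]. destruct (Hrec (S m) ltac:(lia)) as [E3 E4].
    assert (Ey : y (S m) / A = B * (x m / A) + y m) by (rewrite E2; field; exact HA).
    assert (Ex : x (S m) = A * A * (x m / A) + N * (B * y m)) by (rewrite E1; field; exact HA).
    assert (Iy' : is_integer (y (S m) / A)) by (rewrite Ey; integer_closure).
    assert (Ix' : is_integer (x (S m))) by (rewrite Ex; integer_closure).
    split; [exact Iy'|split].
    - replace (x (S (S m)) / A) with (x (S m) + N * (B * (y (S m) / A)))
        by (rewrite E3; field; exact HA).
      integer_closure.
    - replace (y (S (S m))) with (B * x (S m) + A * A * (y (S m) / A))
        by (rewrite E4; field; exact HA).
      integer_closure. }
  assert (Hodd : forall j, is_integer (x (2 * j + 1)%nat / A) /\ is_integer (y (2 * j + 1)%nat)).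
  { induction j as [|j [Ix Iy]].
    - change (2 * 0 + 1)%nat with 1%nat. rewrite Hx1, Hy1.
      split; [exists 1%Z; field; exact HA | exact IB].
    - replace (2 * S j + 1)%nat with (S (S (2 * j + 1))) by lia.
      destruct (Hnext (2 * j + 1)%nat ltac:(lia) Ix Iy) as [_ H]. exact H. }
  intros k Hk. destruct k as [|j]; [lia|].
  destruct (Hodd j) as [Ix Iy]. split.
  - replace (2 * S j)%nat with (S (2 * j + 1)) by lia.
    apply (Hnext (2 * j + 1)%nat ltac:(lia) Ix Iy).
  - apply Hodd.
Qed.

Theorem theorem3 (n : nat) (a b : Q) (ak bk : nat -> Q) :
  (2 <= n)%nat ->
  ~ (exists m : nat, n = (m * m)%nat) ->
  (0 < a)%Q -> (0 < b)%Q ->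
  (a * a - inject_Z (Z.of_nat n) * (b * b) == -1)%Q ->
  (forall k : nat, (1 <= k)%nat ->
     (Q2R a + Q2R b * sqrt (INR n)) ^ k = Q2R (ak k) + Q2R (bk k) * sqrt (INR n)) ->
  Un_cv
    (fun N => sum_f_R0 (fun j =>
        RogersL (1 / (INR n * (Q2R (bk (2 * (S j))%nat) / Q2R a) ^ 2))
      + RogersL (1 / (Q2R (ak (2 * (S j) + 1)%nat) / Q2R a) ^ 2)) N)
    (RogersL (1 / (Q2R a + Q2R b * sqrt (INR n)) ^ 2))
  /\
  ((exists za zb : Z, Q2R a = IZR za /\ Q2R b = IZR zb) ->
   forall k : nat, (1 <= k)%nat ->
     (exists z : Z, Q2R (bk (2 * k)%nat) / Q2R a = IZR z) /\
     (exists z : Z, Q2R (ak (2 * k + 1)%nat) / Q2R a = IZR z)).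
Proof.
  intros _ Hnonsq Ha Hb Hpell Hpow.
  pose proof (sqrt_nonsquare_irrational n Hnonsq) as Hirr.
  pose proof (Q2R_pos a Ha) as HA. pose proof (Q2R_pos b Hb) as HB.
  pose proof (Q2R_pell n a b Hpell) as HpellR.
  split.
  - destruct (negative_pell_unit _ _ _ HA HB (pos_INR n) HpellR) as [Hw Hu].
    set (w := Q2R b * sqrt (INR n) - Q2R a) in *.
    assert (Ht : 0 < w ^ 2 < 1) by (simpl; split; nra).
    replace (1 / (Q2R a + Q2R b * sqrt (INR n)) ^ 2) with (w ^ 2)
      by (rewrite Hu; field; lra).
    rewrite RogersL_rogers by exact Ht.
    pose proof (Un_cv_sum_pairs _ _ (rogers_telescoped_series _ Ht)) as Hcv.
    apply is_lim_seq_Reals. apply is_lim_seq_Reals in Hcv.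
    eapply is_lim_seq_ext; [|exact Hcv]. intro N. apply sum_eq. intros j _.
    destruct (pell_dilog_arguments n a b ak bk Hirr Hpow HA HB HpellR j) as [E1 E2].
    rewrite E1, E2, !RogersL_rogers by (apply tele_term_bounds; [exact Ht | lia]). reflexivity.
  - intros [za [zb [Hza Hzb]]].
    apply (pell_coeffs_divisible (Q2R a) (Q2R b) (INR n)
             (fun k => Q2R (ak k)) (fun k => Q2R (bk k))).
    + exists za. exact Hza.
    + exists zb. exact Hzb.
    + exists (Z.of_nat n). apply INR_IZR_INZ.
    + lra.
    + apply (pell_first_coeffs n a b ak bk Hirr Hpow).
    + apply (pell_first_coeffs n a b ak bk Hirr Hpow).
    + intros k Hk. apply (pell_recursion n a b ak bk Hirr Hpow k Hk).
Qed.
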